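(* For a threshold $h\ge0$, the AMC-$h$ policy is temporal Nash stable if and only if $h=0$.
   Context: Players: a finite set $N=\{a_1,\dots,a_n\}$. A characteristic function is $v:2^N\to\mathbb{R}_{\ge 0}$ with $v(\emptyset)=0$, monotone and bounded: $\mathsf{min}\le v(S)\le v(T)\le\mathsf{max}$ for all nonempty $S\subseteq T\subseteq N$, for fixed constants $0<\mathsf{min}\le\mathsf{max}$. Online process: an arrival order is a permutation $\pi=(\pi_1,\dots,\pi_n)$ of $N$; player $\pi_t$ arrives at time $t$; $\pi_{\prec t}$ is the set of players arriving before time $t$ and $\pi^{-1}(i)$ the arrival time of $i$. For $S\subseteq N$, $\pi_{|S}$ denotes the players of $S$ in the relative order of $\pi$. Let $C^{t-1}$ be the coalition structure of players arrived before time $t$ ($C^0=\emptyset$). At time $t$, player $\pi_t$ either joins an existing coalition $S\in C^{t-1}$ or forms $\{\pi_t\}$ (choice $S=\emptyset$); decisions are never revised. AMC-$h$ policy: when player $i$ joins coalition $S$, let $\mathsf{MC}_i=v((\pi_{\prec\pi^{-1}(i)}\cap S)\cup\{i\})-v(\pi_{\prec\pi^{-1}(i)}\cap S)$. If $\mathsf{MC}_i\le h$, all of $\mathsf{MC}_i$ is added to the share of the last player of $S$ who arrived before $i$; if $\mathsf{MC}_i>h$, that previous player additionally receives $h$ and $i$ receives $\mathsf{MC}_i-h$; if $i$ is the first player of her coalition, the ''previous player'' is $i$ herself. Shares already assigned are never reduced; $\varphi_i(S,\pi_{|S})$ is $i$'s accumulated share when the coalition is $S$. Greedy players: $\pi_t$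 chooses $S\in C^{t-1}\cup\{\emptyset\}$ maximizing $\varphi_{\pi_t}(S\cup\{\pi_t\},\pi_{|S\cup\{\pi_t\}})$ (predetermined tie-breaking). $C_g$ is the final structure; $\overline{C}_g^{t}\subseteq C_g$ is the set of final coalitions whose first-arriving member arrived at time at most $t$. Temporal Nash stability: for every $v$ and $\pi$, every $S\in C_g$ and every $i\in S$, there is no $S'\in\overline{C}_g^{\pi^{-1}(i)-1}\cup\{\emptyset\}$ with $\varphi_i(S'\cup\{i\},\pi_{|S'\cup\{i\}})>\varphi_i(S,\pi_{|S})$. *)

From HB Require Import structures.
From mathcomp Require Import all_boot all_order fingroup perm all_algebra.
From mathcomp Require Import reals.
Set Implicit Arguments. Unset Strict Implicit. Unset Printing Implicit Defensive.
Import Order.TTheory GRing.Theory Num.Theory.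
Local Open Scope ring_scope.

Section AMC.
Variables (R : realType) (n : nat).
Implicit Types (v : {set 'I_n} -> R) (pi : {perm 'I_n}) (S : {set 'I_n}).

(* arrival time (0-based) of player i: pi t is the player arriving at time t *)
Definition arr pi (i : 'I_n) : 'I_n := (pi^-1)%g i.

Definition is_charfun (mn mx : R) v : Prop :=
  v set0 = 0 /\
  forall S T : {set 'I_n}, S != set0 -> S \subset T ->
    mn <= v S /\ v S <= v T /\ v T <= mx.

Definition before pi S (j : 'I_n) : {set 'I_n} :=
  [set k in S | (arr pi k < arr pi j)%N].

Definition MC v pi S (j : 'I_n) : R :=
  v (before pi S j :|: [set j]) - v (before pi S j).

(* prevb S j i : i is the "previous player" of j in S: the last member of S
   arriving before j, or j herself if j is the first member of S *)
Definition prevb pi S (j i : 'I_n) : bool :=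
  if [exists k in S, (arr pi k < arr pi j)%N] then
    [&& i \in S, (arr pi i < arr pi j)%N &
        [forall k in S, (arr pi k < arr pi j)%N ==> (arr pi k <= arr pi i)%N]]
  else i == j.

Definition share v (h : R) pi S (i : 'I_n) : R :=
  \sum_(j in S)
    ((if prevb pi S j i then (if MC v pi S j <= h then MC v pi S j else h)
      else 0)
     + (if (j == i) && (h < MC v pi S j) then MC v pi S j - h else 0)).

(* one step of the online process: player p joins S (S = set0: new singleton) *)
Definition step (C : {set {set 'I_n}}) (p : 'I_n) S : {set {set 'I_n}} :=
  if S == set0 then [set p] |: C else (S :|: [set p]) |: (C :\ S).

Fixpoint build (s : seq ('I_n * {set 'I_n})) (C : {set {set 'I_n}}) :=
  if s is (p, X) :: s' then build s' (step C p X) else C.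

(* coalition structure C^t of the players arriving at times < t, given the
   choices choice t (coalition joined by the player arriving at time t) *)
Definition Cs pi (choice : 'I_n -> {set 'I_n}) (t : nat) : {set {set 'I_n}} :=
  build (take t [seq (pi k, choice k) | k <- enum 'I_n]) set0.

Definition greedy_run v (h : R) pi (choice : 'I_n -> {set 'I_n}) : Prop :=
  forall t : 'I_n,
    choice t \in Cs pi choice t :|: [set set0] /\
    forall S', S' \in Cs pi choice t :|: [set set0] ->
      share v h pi (S' :|: [set pi t]) (pi t)
        <= share v h pi (choice t :|: [set pi t]) (pi t).

(* 1-based arrival time, as in the paper *)
Definition time pi (i : 'I_n) : nat := (arr pi i).+1.

Definition Cbar pi (Cg : {set {set 'I_n}}) (t : nat) : {set {set 'I_n}} :=
  [set S in Cg | [exists k in S,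
     (time pi k <= t)%N && [forall k' in S, (arr pi k <= arr pi k')%N]]].

End AMC.

Definition TNS (R : realType) (h : R) : Prop :=
  forall (n : nat) (mn mx : R) (v : {set 'I_n} -> R) (pi : {perm 'I_n})
         (choice : 'I_n -> {set 'I_n}),
    0 < mn -> mn <= mx -> is_charfun mn mx v -> greedy_run v h pi choice ->
    forall (S : {set 'I_n}) (i : 'I_n),
      S \in Cs pi choice n -> i \in S ->
      forall S' : {set 'I_n},
        S' \in Cbar pi (Cs pi choice n) (time pi i - 1) :|: [set set0] ->
        ~ (share v h pi S i < share v h pi (S' :|: [set i]) i).

(* At h = 0 the share of a player is exactly her marginal contribution to the
   members of her coalition who arrived before her, so it is fixed at her
   arrival.  A final coalition that already existed when player i arrived,
   cut down to its members arriving before i, was one of the options of i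
   (or is empty), and greediness makes every such deviation no better.

   For h > 0 a player also collects up to h of the marginal contribution of
   the next player to join her coalition, which she cannot foresee.  Let
   p0, p1, p2 arrive in this order, with v = 3h on coalitions containing p0
   and p2 and v = h/2 on the other nonempty ones.  Then p1 stays alone
   (h/2 against 0 next to p0), p2 joins p0 (3h/2), and afterwards p1 would
   get h by joining {p0, p2}, a coalition founded before her arrival. *)

From HB Require Import structures.
From mathcomp Require Import all_boot all_order fingroup perm all_algebra.
From mathcomp Require Import reals lra.
Set Implicit Arguments. Unset Strict Implicit. Unset Printing Implicit Defensive.
Import Order.TTheory GRing.Theory Num.Theory.
Local Open Scope ring_scope.

Lemma set1_neq0 (T : finType) (x : T) : [set x] != set0.
Proof. by apply/set0Pn; exists x; rewrite set11. Qed.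

Section OnlineProcess.
Variables (n : nat) (pi : {perm 'I_n}) (choice : 'I_n -> {set 'I_n}).

Lemma arrK : cancel pi (arr pi). Proof. exact: permK. Qed.

Lemma arrKV : cancel (arr pi) pi. Proof. exact: permKV. Qed.

Lemma build_rcons (s : seq ('I_n * {set 'I_n})) x C :
  build (rcons s x) C = step (build s C) x.1 x.2.
Proof. by case: x => p X; elim: s C => [|[q Y] s IHs] C //=; rewrite IHs. Qed.

Lemma Cs0 : Cs pi choice 0 = set0.
Proof. by rewrite /Cs take0. Qed.

Lemma CsS (t : 'I_n) :
  Cs pi choice t.+1 = step (Cs pi choice t) (pi t) (choice t).
Proof.
rewrite /Cs (take_nth (pi t, choice t)); last by rewrite size_map size_enum_ord.
by rewrite build_rcons (nth_map t) ?size_enum_ord // nth_ord_enum.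
Qed.

Lemma mem_step (C : {set {set 'I_n}}) (p : 'I_n) (X F : {set 'I_n}) :
  F \in step C p X -> F = X :|: [set p] \/ F \in C.
Proof.
rewrite /step; case: eqP => [->|_]; rewrite ?set0U => /setU1P[->|]; auto.
by case/setD1P; auto.
Qed.

Hypothesis choice_run :
  forall t : 'I_n, choice t \in Cs pi choice t :|: [set set0].

Lemma choice_Cs (t : 'I_n) : choice t != set0 -> choice t \in Cs pi choice t.
Proof.
by move=> X0; move: (choice_run t); rewrite in_setU in_set1 (negbTE X0) orbF.
Qed.

Lemma Cs_arr_lt (t : nat) (F : {set 'I_n}) (k : 'I_n) :
  (t <= n)%N -> F \in Cs pi choice t -> k \in F -> (arr pi k < t)%N.
Proof.
elim: t F => [|t IHt] F tn; first by rewrite Cs0 inE.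
rewrite -[t]/(nat_of_ord (Ordinal tn)) CsS.
case/mem_step=> [->|FC kF]; last exact/leqW/(IHt F (ltnW tn)).
case/setUP=> [kX|/set1P ->]; last by rewrite arrK.
apply/leqW/(IHt (choice (Ordinal tn)) (ltnW tn)) => //.
by apply: choice_Cs; apply/set0Pn; exists k.
Qed.

Lemma choice_arr_lt (t : 'I_n) k : k \in choice t -> (arr pi k < t)%N.
Proof.
move=> kX; have X0 : choice t != set0 by apply/set0Pn; exists k.
exact: Cs_arr_lt (ltnW (ltn_ord t)) (choice_Cs X0) kX.
Qed.

Lemma Cs_restrict (t u : nat) F :
  (t <= u)%N -> (u <= n)%N -> F \in Cs pi choice u ->
  [set k in F | (arr pi k < t)%N] \in Cs pi choice t :|: [set set0].
Proof.
elim: u F => [|u IHu] F tu un; first by rewrite Cs0 inE.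
move=> FC; case: (eqVneq t u.+1) => [tE|tu'].
  suff -> : [set k in F | (arr pi k < t)%N] = F by rewrite in_setU tE FC.
  by apply/setP=> k; rewrite inE tE; apply/andb_idr/(Cs_arr_lt un FC).
have {tu'}tu : (t <= u)%N by rewrite -ltnS ltn_neqAle tu' tu.
pose u' := Ordinal un.
move: FC; rewrite -[u]/(nat_of_ord u') CsS => /mem_step[->|].
  have -> : [set k in choice u' :|: [set pi u'] | (arr pi k < t)%N]
          = [set k in choice u' | (arr pi k < t)%N].
    apply/setP=> k; rewrite !inE andb_orl.
    case: (eqVneq k (pi u')) => [->|]; last by rewrite orbF.
    by rewrite arrK /= ltnNge tu !andbF.
  have [->|X0] := eqVneq (choice u') set0.
    by rewrite setIdE set0I in_setU set11 orbT.
  exact/(IHu _ tu (ltnW un))/choice_Cs.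
exact: IHu tu (ltnW un).
Qed.

Lemma before_final S i :
  S \in Cs pi choice n -> i \in S -> before pi S i = choice (arr pi i).
Proof.
move=> SC iS; set a := arr pi i; have pia : pi a = i by exact: arrKV.
set Z := [set k in S | (arr pi k < a.+1)%N].
have iZ : i \in Z by rewrite inE iS ltnSn.
have : Z \in Cs pi choice a.+1 :|: [set set0].
  exact: Cs_restrict (ltn_ord a) (leqnn n) SC.
case/setUP=> [|/set1P Z0]; last by rewrite Z0 inE in iZ.
rewrite CsS pia => /mem_step[ZE|ZC].
  have -> : before pi S i = Z :\ i.
    apply/setP=> k; rewrite !inE ltnS /a [(arr pi k <= _)%N]leq_eqVlt.
    rewrite val_eqE (inj_eq (can_inj arrKV)).
    by case: (eqVneq k i) => [->|ki]; rewrite ?ltnn ?andbF.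
  by rewrite ZE setUC setU1K //; apply/negP => /choice_arr_lt; rewrite ltnn.
by have := Cs_arr_lt (ltnW (ltn_ord a)) ZC iZ; rewrite ltnn.
Qed.

End OnlineProcess.

Lemma shareE (R : realType) n (v : {set 'I_n} -> R) h pi S i :
  share v h pi S i =
    \sum_(j in S | prevb pi S j i) Num.min (MC v pi S j) h
    + (if i \in S then Num.max (MC v pi S i - h) 0 else 0).
Proof.
rewrite /share big_split /= -big_mkcondr; congr (_ + _).
  by apply: eq_bigr => j _; rewrite minEle.
case: ifP => iS; last first.
  by rewrite big1 // => j jS; case: eqP => // ji; rewrite -ji jS in iS.
rewrite (bigD1 i) //= eqxx big1 ?addr0 => [|j /andP[_ /negbTE ->] //].
case: ltrP => [h_lt|MC_le]; first by rewrite max_l // subr_ge0 ltW.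
by rewrite max_r // subr_le0.
Qed.

Lemma charfun_MC_ge0 (R : realType) n (mn mx : R) (v : {set 'I_n} -> R) :
  0 <= mn -> is_charfun mn mx v -> forall pi S j, 0 <= MC v pi S j.
Proof.
move=> mn_ge0 [v0 v_mono] pi S j; rewrite /MC subr_ge0.
have [->|B0] := eqVneq (before pi S j) set0.
  by rewrite v0 set0U (le_trans mn_ge0) // (v_mono _ _ (set1_neq0 j) (subxx _)).1.
exact: (v_mono _ _ B0 (subsetUl _ _)).2.1.
Qed.

Section ZeroThreshold.
Variables (R : realType) (n : nat) (pi : {perm 'I_n}) (v : {set 'I_n} -> R).
Implicit Types (S : {set 'I_n}) (i j : 'I_n).
Hypothesis MC_ge0 : forall S j, 0 <= MC v pi S j.

Lemma share0 S i : share v 0 pi S i = if i \in S then MC v pi S i else 0.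
Proof.
rewrite shareE big1 ?add0r => [|j _]; last exact: min_r.
by rewrite subr0 max_l.
Qed.

Lemma before_setU1 S i : before pi (S :|: [set i]) i = before pi S i.
Proof.
apply/setP=> k; rewrite !inE andb_orl.
by case: eqP => [->|]; rewrite ?ltnn ?andbF ?orbF.
Qed.

Lemma before_idem S i : before pi (before pi S i) i = before pi S i.
Proof. by apply/setP=> k; rewrite !inE -andbA andbb. Qed.

Lemma share0_before S i : i \in S ->
  share v 0 pi S i = share v 0 pi (before pi S i :|: [set i]) i.
Proof.
by move=> iS; rewrite !share0 iS in_setU set11 orbT /MC before_setU1 before_idem.
Qed.

End ZeroThreshold.

Lemma TNS0 (R : realType) : TNS (0 : R).
Proof.
move=> n mn mx v pi choice mn_gt0 _ v_cf run S i SC iS S' S'C.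
have MC_ge0 := charfun_MC_ge0 (ltW mn_gt0) v_cf pi.
have choice_run t := (run t).1.
have S'_run : before pi S' i \in Cs pi choice (arr pi i) :|: [set set0].
  move: S'C; rewrite in_setU in_set1 => /orP[/setIdP[S'C _]|/eqP ->].
    exact: (Cs_restrict choice_run (ltnW (ltn_ord (arr pi i))) (leqnn n) S'C).
  have -> : before pi set0 i = set0 by apply/setP=> k; rewrite !inE.
  by rewrite in_setU set11 orbT.
apply/negP; rewrite -leNgt (share0_before MC_ge0 iS).
rewrite (share0_before MC_ge0 (S := S' :|: [set i])) ?in_setU ?set11 ?orbT //.
rewrite before_setU1 (before_final choice_run SC iS).
by have := (run (arr pi i)).2 _ S'_run; rewrite arrKV.
Qed.

Definition p0 : 'I_3 := @Ordinal 3 0 isT.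
Definition p1 : 'I_3 := @Ordinal 3 1 isT.
Definition p2 : 'I_3 := @Ordinal 3 2 isT.

Lemma ord3P (k : 'I_3) : [\/ k = p0, k = p1 | k = p2].
Proof.
case: k => [[|[|[|m]]] lt_k3] //.
- by apply: Or31; apply: val_inj.
- by apply: Or32; apply: val_inj.
- by apply: Or33; apply: val_inj.
Qed.

Lemma existsI3 (P : pred 'I_3) : [exists k, P k] = [|| P p0, P p1 | P p2].
Proof.
apply/existsP/or3P => [[k]|[]]; try by eexists; eassumption.
by case: (ord3P k) => ->; [apply: Or31|apply: Or32|apply: Or33].
Qed.

Lemma forallI3 (P : pred 'I_3) : [forall k, P k] = [&& P p0, P p1 & P p2].
Proof. by rewrite -[LHS]negbK negb_forall existsI3 !negb_or !negbK. Qed.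

Lemma sumI3 (V : nmodType) (P : pred 'I_3) (F : 'I_3 -> V) :
  \sum_(j | P j) F j = (if P p0 then F p0 else 0)
    + (if P p1 then F p1 else 0) + (if P p2 then F p2 else 0).
Proof.
rewrite big_mkcond /= !big_ord_recr big_ord0 /= add0r.
by congr (_ + _ + _); congr (if P _ then F _ else 0); apply: val_inj.
Qed.

Lemma arr1 n (k : 'I_n) : arr 1 k = k.
Proof. by rewrite /arr invg1 perm1. Qed.

Section Counterexample.
Variables (R : realType) (h : R).
Hypothesis h_gt0 : 0 < h.

(* [lra] ignores section hypotheses, hence the copies of [h_gt0] below. *)

Definition game (S : {set 'I_3}) : R :=
  if [set p0; p2] \subset S then 3 * h
  else if [exists k, k \in S] then h / 2 else 0.

Definition greedy_choice (t : 'I_3) : {set 'I_3} :=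
  if t == p2 then [set p0] else set0.

Ltac eval_share :=
  rewrite shareE sumI3 /prevb /MC /before /game;
  rewrite !subUset !sub1set !existsI3 !forallI3 !inE !arr1 /= ?minEle ?maxEle;
  have := h_gt0;
  repeat match goal with
  | |- context [if ?x <= ?y then _ else _] => case: (lerP x y)
  | |- context [if ?x < ?y then _ else _] => case: (ltrP x y)
  end; lra.

Lemma share_p1_alone : share game h 1 [set p1] p1 = h / 2.
Proof. eval_share. Qed.

Lemma share_p1_with_p0 : share game h 1 [set p0; p1] p1 = 0.
Proof. eval_share. Qed.

Lemma share_p2_alone : share game h 1 [set p2] p2 = h / 2.
Proof. eval_share. Qed.

Lemma share_p2_with_p1 : share game h 1 [set p1; p2] p2 = 0.
Proof. eval_share. Qed.

Lemma share_p2_with_p0 : share game h 1 [set p0; p2] p2 = 3 * h / 2.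
Proof. eval_share. Qed.

Lemma share_p1_with_p0_p2 : share game h 1 ([set p0; p2] :|: [set p1]) p1 = h.
Proof. eval_share. Qed.

Lemma game_charfun : is_charfun (h / 2) (3 * h) game.
Proof.
split; first by rewrite /game subUset !sub1set existsI3 !inE.
move=> S T S0 ST.
have T0 : T != set0 by apply: contraNneq S0 => T0; rewrite -subset0 -T0.
have nonempty (A : {set 'I_3}) : A != set0 -> [exists k, k \in A].
  by case/set0Pn=> k kA; apply/existsP; exists k.
rewrite /game (nonempty S S0) (nonempty T T0); have := h_gt0.
case: ifP => [pS|_]; first by rewrite (subset_trans pS ST); lra.
by case: ifP; lra.
Qed.

Lemma Cs_greedy_choice1 : Cs 1 greedy_choice 1 = [set [set p0]].
Proof. by rewrite (CsS _ _ p0) Cs0 /step /greedy_choice perm1 eqxx setU0. Qed.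

Lemma Cs_greedy_choice2 : Cs 1 greedy_choice 2 = [set [set p1]; [set p0]].
Proof. by rewrite (CsS _ _ p1) Cs_greedy_choice1 /step /greedy_choice perm1 eqxx. Qed.

Lemma Cs_greedy_choice3 :
  Cs 1 greedy_choice 3 = [set [set p0; p2]; [set p1]].
Proof.
rewrite (CsS _ _ p2) Cs_greedy_choice2 /step /greedy_choice perm1 /=.
rewrite (negbTE (set1_neq0 p0)); apply/setP=> X; rewrite !inE.
case: (eqVneq X [set p1]) => [->|]; rewrite ?(inj_eq set1_inj) //=.
by rewrite andNb.
Qed.

Lemma greedy_choice_run : greedy_run game h 1 greedy_choice.
Proof.
have h_pos := h_gt0.
move=> t; case: (ord3P t) => ->; rewrite /greedy_choice perm1 /=.
- rewrite Cs0; split=> [|S']; first by rewrite !inE eqxx.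
  by rewrite !inE => /eqP ->.
- rewrite Cs_greedy_choice1; split=> [|S']; first by rewrite !inE eqxx orbT.
  rewrite !inE set0U share_p1_alone => /orP[|] /eqP ->.
    by rewrite share_p1_with_p0; lra.
  by rewrite set0U share_p1_alone.
- rewrite Cs_greedy_choice2; split=> [|S']; first by rewrite !inE eqxx orbT.
  rewrite !inE share_p2_with_p0 => /orP[/orP[|]|] /eqP ->.
  + by rewrite share_p2_with_p1; lra.
  + by rewrite share_p2_with_p0.
  + by rewrite set0U share_p2_alone; lra.
Qed.

Lemma not_TNS : ~ TNS h.
Proof.
have h_pos := h_gt0.
move=> tns; apply: (tns 3 (h / 2) (3 * h) game 1%g greedy_choice _ _
  game_charfun greedy_choice_run [set p1] p1 _ (set11 p1) [set p0; p2]).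
- by lra.
- by lra.
- by rewrite Cs_greedy_choice3 !inE eqxx orbT.
- rewrite in_setU inE Cs_greedy_choice3 !inE eqxx /=.
  by rewrite /time existsI3 !forallI3 !inE !arr1.
- by rewrite share_p1_alone share_p1_with_p0_p2; lra.
Qed.

End Counterexample.

Theorem proposition4 (R : realType) (h : R) : 0 <= h -> (TNS h <-> h = 0).
Proof.
move=> h_ge0; split=> [tns|->]; last exact: TNS0.
have [//|h_neq0] := eqVneq h 0.
have h_gt0 : 0 < h by rewrite lt0r h_neq0.
by case: (not_TNS h_gt0 tns).
Qed.
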